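(* Let $g\geq 3$ and let $\eta$ be an integer with $2\leq\eta\leq g$. Then there exist non-negative integers $g_1$, $i$ and $j$ such that (1) $2g_1\geq g-2$; (2) $i+j+1=\eta$; (3) $i+2j+2g_1=2g-2$; (4) $\underbrace{\mathcal{M}_{0,3}\times\cdots\times\mathcal{M}_{0,3}}_{i\text{ copies}}\times\underbrace{\mathcal{M}_{1,2}\times\cdots\times\mathcal{M}_{1,2}}_{j\text{ copies}}\times\mathcal{M}_{g_1,2}\subset\partial\mathcal{M}_g$, i.e. a closed surface of genus $g$ can be pinched along disjoint simple closed curves to a nodal surface whose components are exactly $i$ thrice-punctured spheres, $j$ surfaces of genus $1$ with $2$ punctures and one surface of genus $g_1$ with $2$ punctures, each component being arbitrary in its moduli space.
   Context: $\mathcal{M}_{g,n}$ denotes the moduli space of complete finite-area hyperbolic surfaces of genus $g$ with $n$ punctures (cusps), $\mathcal{M}_g=\mathcal{M}_{g,0}$. $\partial\mathcal{M}_g$ is the boundary of the Deligne--Mumford compactification of $\mathcal{M}_g$; it is stratified, each stratum being a product of lower-dimensional moduli spaces $\mathcal{M}_{g_i,n_i}$, corresponding to the components of nodal surfaces obtained by pinching disjoint simple closed curves. *)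

(* Boundary strata of the Deligne--Mumford compactification
   are encoded combinatorially by their dual (stable) graphs. *)
From mathcomp Require Import all_boot.
Set Implicit Arguments. Unset Strict Implicit. Unset Printing Implicit Defensive.

(* A nodal (stable) curve type: V components (vertices 'I_V), each with a genus,
   and a list of nodes (edges, loops allowed) joining two components. *)
Record dual_graph := DualGraph {
  dg_V : nat;
  dg_genus : 'I_dg_V -> nat;
  dg_edges : seq ('I_dg_V * 'I_dg_V)
}.

(* number of punctures (node branches) on component v *)
Definition dg_val (G : dual_graph) (v : 'I_(dg_V G)) : nat :=
  count (fun e => e.1 == v) (dg_edges G) + count (fun e => e.2 == v) (dg_edges G).

Definition dg_adj (G : dual_graph) : rel 'I_(dg_V G) :=
  fun u v => has (fun e => ((e.1 == u) && (e.2 == v)) || ((e.1 == v) && (e.2 == u)))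
                 (dg_edges G).

Definition dg_connected (G : dual_graph) : Prop :=
  forall u v : 'I_(dg_V G), connect (@dg_adj G) u v.

Definition dg_stable (G : dual_graph) : Prop :=
  forall v : 'I_(dg_V G), 2 < 2 * dg_genus v + dg_val v.

(* arithmetic genus: sum g_v + #E - #V + 1 = g *)
Definition dg_total_genus_is (G : dual_graph) (g : nat) : Prop :=
  (\sum_(v < dg_V G) dg_genus v) + size (dg_edges G) + 1 = g + dg_V G.

Definition dg_types (G : dual_graph) : seq (nat * nat) :=
  [seq (dg_genus v, dg_val v) | v <- enum 'I_(dg_V G)].

(* G is the dual graph of a nodal surface in the boundary of M_g
   (obtained by pinching at least one curve of a closed genus-g surface) *)
Definition boundary_graph (g : nat) (G : dual_graph) : Prop :=
  [/\ dg_connected G, dg_stable G, dg_total_genus_is G g & 0 < size (dg_edges G)].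

(* The product  prod_k M_{g_k,n_k}  (types given as a list) is a stratum of
   the boundary of M_g. *)
Definition stratum_of_boundary (g : nat) (types : seq (nat * nat)) : Prop :=
  exists G : dual_graph, boundary_graph g G /\ perm_eq (dg_types G) types.

From mathcomp Require Import all_boot zify.
Set Implicit Arguments. Unset Strict Implicit. Unset Printing Implicit Defensive.

(* Pinch the genus-g surface into a necklace: a cycle of j + p + 1 components,
   one of genus g1, j tori and p spheres, each sphere of the cycle being joined
   to a further sphere that carries a self-node.  Every component then has type
   (g1, 2), (1, 2) or (0, 3), there are i = 2p spheres, and the dual graph has
   first Betti number p + 1, so the arithmetic genus is g1 + j + p + 1.  Given
   g and eta, the choice g1 = max(g - eta, (g - 1)/2) makes both
   j = 2g - 1 - eta - 2 g1 and p = eta + g1 - g non-negative. *)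

Lemma count_iota_addn d a m v :
  count (fun x => d + x == v) (iota a m) = (d + a <= v < d + a + m).
Proof.
by rewrite -(count_map (addn d) (pred1 v)) -iotaDl count_uniq_mem ?iota_uniq ?mem_iota.
Qed.

Lemma map_in_const (T U : eqType) (f : T -> U) (c : U) (s : seq T) :
  {in s, forall x, f x = c} -> map f s = nseq (size s) c.
Proof.
move=> fc; rewrite -(size_map f); apply/all_pred1P.
by rewrite all_map; apply/allP=> x /fc /= ->.
Qed.

Section NatDualGraph.
Variables (n : nat) (genus : nat -> nat) (E : seq (nat * nat)).

Definition nat_dual_graph : dual_graph :=
  DualGraph (fun v : 'I_n.+1 => genus v) [seq (inord e.1, inord e.2) | e <- E].

Definition nat_val (v : nat) : nat :=
  count (fun e => e.1 == v) E + count (fun e => e.2 == v) E.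

Hypothesis E_bounded : forall e, e \in E -> e.1 <= n /\ e.2 <= n.

Lemma nat_dual_graph_val (v : 'I_n.+1) : @dg_val nat_dual_graph v = nat_val v.
Proof.
rewrite /dg_val /nat_val /= !count_map.
by congr (_ + _); apply: eq_in_count => e /E_bounded[e1 e2] /=;
  rewrite -val_eqE /= inordK.
Qed.

Lemma nat_dual_graph_adj a b :
  (a, b) \in E -> @dg_adj nat_dual_graph (inord a) (inord b).
Proof.
move=> abE; apply/hasP; exists (inord a, inord b); last by rewrite /= !eqxx.
exact: (map_f (fun e : nat * nat => (inord e.1 : 'I_n.+1, inord e.2 : 'I_n.+1)) abE).
Qed.

Lemma nat_dual_graph_connected :
  (forall v, v <= n -> connect (@dg_adj nat_dual_graph) (inord 0) (inord v)) ->
  dg_connected nat_dual_graph.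
Proof.
move=> root_conn u v.
have adj_sym : connect_sym (@dg_adj nat_dual_graph).
  by apply: sym_connect_sym => x y; apply: eq_has => e; rewrite orbC.
rewrite -(inord_val u) -(inord_val v) /=.
apply: connect_trans (root_conn _ (ltn_ord v)).
by rewrite adj_sym; apply: root_conn; rewrite -ltnS.
Qed.

Lemma nat_dual_graph_types :
  dg_types nat_dual_graph = [seq (genus v, nat_val v) | v <- iota 0 n.+1].
Proof.
rewrite /dg_types -val_enum_ord -map_comp; apply: eq_map => v /=.
by rewrite nat_dual_graph_val.
Qed.

Lemma nat_dual_graph_total_genus g :
  \sum_(v <- iota 0 n.+1) genus v + size E = g + n ->
  dg_total_genus_is nat_dual_graph g.
Proof.
rewrite /dg_total_genus_is /= size_map -(big_mkord xpredT genus) /index_iota subn0.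
by move=> ->; rewrite addn1 addnS.
Qed.
End NatDualGraph.

Section Necklace.
Variables (g1 j p : nat).
Let n := j + p.

Definition necklace_genus (v : nat) : nat :=
  if v == 0 then g1 else if v <= j then 1 else 0.

Definition necklace_edges : seq (nat * nat) :=
  [seq (x, x.+1) | x <- iota 0 n] ++ (n, 0)
  :: [seq (x, p + x) | x <- iota j.+1 p] ++ [seq (x, x) | x <- iota n.+1 p].

Definition necklace : dual_graph :=
  nat_dual_graph (n + p) necklace_genus necklace_edges.

Lemma necklace_edges_bounded e :
  e \in necklace_edges -> e.1 <= n + p /\ e.2 <= n + p.
Proof.
rewrite mem_cat inE mem_cat => /or4P[| /eqP-> | |] /=; try lia;
  by move=> /mapP[x]; rewrite mem_iota /n => x_range -> /=; lia.
Qed.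

Lemma necklace_val v :
  v <= n + p -> nat_val necklace_edges v = if v <= j then 2 else 3.
Proof.
rewrite /nat_val !count_cat /= !count_cat !count_map.
(* The components x and x.+1 of the edges match [0 + x] and [1 + x] by conversion. *)
rewrite !(count_iota_addn 0) !(count_iota_addn 1) !(count_iota_addn p).
rewrite /n; case: ifP; lia.
Qed.

Lemma necklace_connect_cycle v :
  v <= n -> connect (@dg_adj necklace) (inord 0) (inord v).
Proof.
elim: v => [|v IHv] v_le_n; first exact: connect0.
apply: connect_trans (IHv (ltnW v_le_n)) (connect1 _).
apply: nat_dual_graph_adj; rewrite mem_cat (map_f (fun x => (x, x.+1))) //.
by rewrite mem_iota.
Qed.

Lemma necklace_connected : dg_connected necklace.
Proof.
apply: nat_dual_graph_connected => v v_le; have [v_le_n|n_lt_v] := leqP v n.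
  exact: necklace_connect_cycle.
have -> : v = p + (v - p) by rewrite /n in n_lt_v *; lia.
apply: connect_trans (necklace_connect_cycle (_ : v - p <= n)) (connect1 _).
  by rewrite /n in v_le *; lia.
apply: nat_dual_graph_adj.
rewrite mem_cat inE mem_cat (map_f (fun x => (x, p + x))) ?orbT //.
by rewrite mem_iota /n in n_lt_v v_le *; lia.
Qed.

Lemma necklace_vertices : iota 0 (n + p).+1 = 0 :: iota 1 j ++ iota j.+1 (p + p).
Proof. by rewrite -iotaD -addnA. Qed.

Lemma necklace_genus_torus v : 0 < v <= j -> necklace_genus v = 1.
Proof. by rewrite /necklace_genus; case: eqP => [->|_ /andP[_ ->]]. Qed.

Lemma necklace_genus_sphere v : j < v -> necklace_genus v = 0.
Proof.
by rewrite /necklace_genus; case: eqP => [->|_] //; rewrite ltnNge => /negbTE->.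
Qed.

Lemma necklace_stable : 0 < g1 -> dg_stable necklace.
Proof.
move=> g1_gt0 v; have v_le : nat_of_ord v <= n + p := ltn_ord v.
rewrite nat_dual_graph_val ?necklace_val //=; last exact: necklace_edges_bounded.
by rewrite /necklace_genus; do 2?case: ifP; lia.
Qed.

Lemma necklace_total_genus : dg_total_genus_is necklace (g1 + j + p + 1).
Proof.
apply: nat_dual_graph_total_genus.
rewrite -(big_map necklace_genus xpredT id) -sumnE necklace_vertices /= map_cat.
rewrite (@map_in_const _ _ _ 1) => [|v]; last first.
  by rewrite mem_iota => v_range; apply: necklace_genus_torus; lia.
rewrite (@map_in_const _ _ _ 0) => [|v]; last first.
  by rewrite mem_iota => v_range; apply: necklace_genus_sphere; lia.
rewrite /necklace_genus eqxx sumn_cat !sumn_nseq !size_iota.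
by rewrite size_cat /= size_cat !size_map !size_iota /n; lia.
Qed.

Lemma necklace_types :
  dg_types necklace = (g1, 2) :: nseq j (1, 2) ++ nseq (p + p) (0, 3).
Proof.
rewrite nat_dual_graph_types; last exact: necklace_edges_bounded.
rewrite necklace_vertices /= map_cat.
rewrite (@map_in_const _ _ _ (1, 2)) => [|v]; last first.
  rewrite mem_iota => v_range.
  by rewrite necklace_genus_torus ?necklace_val ?ifT //; rewrite /n; lia.
rewrite (@map_in_const _ _ _ (0, 3)) => [|v]; last first.
  rewrite mem_iota => v_range.
  by rewrite necklace_genus_sphere ?necklace_val ?ifF //; rewrite /n; lia.
by rewrite !size_iota necklace_val.
Qed.

Lemma necklace_stratum : 0 < g1 ->
  stratum_of_boundary (g1 + j + p + 1)
    (nseq (p + p) (0, 3) ++ nseq j (1, 2) ++ [:: (g1, 2)]).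
Proof.
move=> g1_gt0; exists necklace; split.
  split; [exact: necklace_connected | exact: necklace_stable
         | exact: necklace_total_genus | by rewrite size_map size_cat addnS].
by rewrite necklace_types perm_sym catA perm_catC /= perm_cons perm_catC.
Qed.

End Necklace.

Lemma necklace_parameters g eta : 3 <= g -> 2 <= eta <= g ->
  exists g1 j p,
    [/\ 0 < g1, g - 2 <= 2 * g1, g = g1 + j + p + 1 & eta = p + p + j + 1].
Proof.
move=> g_ge3 eta_range; pose g1 := maxn (g - eta) ((g - 1) %/ 2).
exists g1, (2 * g - 1 - eta - 2 * g1), (eta + g1 - g); split; rewrite /g1; lia.
Qed.

Theorem lemma2p4 (g eta : nat) (hg : 3 <= g) (heta : 2 <= eta <= g) :
  exists g1 i j : nat,
    [/\ g - 2 <= 2 * g1,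
        i + j + 1 = eta,
        i + 2 * j + 2 * g1 = 2 * g - 2
      & stratum_of_boundary g (nseq i (0, 3) ++ nseq j (1, 2) ++ [:: (g1, 2)])].
Proof.
have [g1 [j [p [g1_gt0 g1_large g_eq eta_eq]]]] := necklace_parameters hg heta.
exists g1, (p + p), j; split; try lia.
by rewrite g_eq; apply: necklace_stratum.
Qed.
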